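(* Consider a fork-join queueing network with nodes $\mathbf N=\{1,\dots,n\}$, topology given by a directed graph $\mathcal G=(\mathbf N,\mathbf A)$, initial buffer contents $r_i\in\{0,1,2,\dots\}\cup\{\infty\}$ with $r_i=\infty$ exactly for the nodes $i$ with $\mathbf P(i)=\emptyset$, and service times $\tau_{ik}>0$ ($i=1,\dots,n$, $k=1,2,\dots$). Let the departure epochs $d_i(k)\in\underline{\mathbb R}$, $k\ge1$, satisfy, for all $i$ and all $k\ge1$, $$d_i(k)=\tau_{ik}\otimes a_i(k)\oplus\tau_{ik}\otimes d_i(k-1),\qquad a_i(k)=\begin{cases}\bigoplus_{j\in\mathbf P(i)} d_j(k-r_i), & \mathbf P(i)\neq\emptyset,\\ \varepsilon, & \mathbf P(i)=\emptyset,\end{cases}$$ with the conventions $d_i(0)=0$ and $d_i(k)=\varepsilon$ for $k<0$. Let $M=\max\{r_i: r_i<\infty\}$ (with $M=0$ if no $r_i$ is finite) and $M'=\max(M,1)$. For each integer $m\ge0$ let $G_m=(g^m_{ij})$ be the $n\times n$ matrix with $g^m_{ij}=0$ if $i\in\mathbf P(j)$ and $r_j=m$, and $g^m_{ij}=\varepsilon$ otherwise, and let $\mathcal G_0$ be the graph associated with $G_0$. Let $\mathcal T_k=\mathrm{diag}(\tau_{1k},\dots,\tau_{nk})$ (off-diagonal entries $\varepsilon$). If $\mathcal G_0$ is acyclic and $p$ is the length of its longest path, then for every $k\ge1$ the vector $\mathbf d(k)=(d_1(k),\dots,d_n(k))^T$ satisfies the explicit equation $$\mathbf d(k)=\bigoplus_{m=1}^{M'}T_m(k)\otimes\mathbf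 d(k-m),$$ where $$T_1(k)=(E\oplus\mathcal T_k\otimes G_0^T)^p\otimes\mathcal T_k\otimes(E\oplus G_1^T),\qquad T_m(k)=(E\oplus\mathcal T_k\otimes G_0^T)^p\otimes\mathcal T_k\otimes G_m^T\ \ (m=2,\dots,M').$$
   Context: Max-plus algebra: on $\underline{\mathbb R}=\mathbb R\cup\{\varepsilon\}$ with $\varepsilon=-\infty$, define $x\oplus y=\max(x,y)$ and $x\otimes y=x+y$ (with $x\otimes\varepsilon=\varepsilon\otimes x=\varepsilon$). For matrices, $(X\oplus Y)_{ij}=x_{ij}\oplus y_{ij}$, $(X\otimes Y)_{ij}=\bigoplus_k x_{ik}\otimes y_{kj}$; matrix–vector products likewise; $\bigoplus$ over an index set denotes iterated $\oplus$ (maximum), and an empty $\oplus$-sum equals $\varepsilon$. $E$ is the $n\times n$ identity (diagonal $0$, off-diagonal $\varepsilon$); $X^0=E$, $X^q=X\otimes X^{q-1}$; $X^T$ is the transpose. The graph associated with an $n\times n$ matrix $X$ has vertices $\{1,\dots,n\}$ and an arc $(i,j)$ iff $x_{ij}\ne\varepsilon$ (loops count as cycles); path length = number of arcs. For the network graph $\mathcal G=(\mathbf N,\mathbf A)$, $\mathbf P(i)=\{j:(j,i)\in\mathbf A\}$ is the set of predecessors of node $i$. Interpretation: $d_i(k)$ is the $k$th departure epoch from node $i$, $a_i(k)$ the $k$th arrival epoch into its queue, $r_i$ the initial number of customers waiting in its buffer; a node with no predecessors represents an infinite external arrival stream. *)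

(* Max-plus algebra over an arbitrary real domain R
   (instantiated to the reals in the paper); epsilon = -infinity is None. *)
From HB Require Import structures.
From mathcomp Require Import all_boot all_order all_algebra.
Set Implicit Arguments. Unset Strict Implicit. Unset Printing Implicit Defensive.
Import Order.TTheory GRing.Theory Num.Theory.

Section MaxPlus.
Variable R : realDomainType.
Local Open Scope ring_scope.

Definition mp := option R.

Definition oplus (x y : mp) : mp :=
  match x, y with
  | None, _ => y
  | _, None => x
  | Some a, Some b => Some (Num.max a b)
  end.

Definition otimes (x y : mp) : mp :=
  match x, y with
  | Some a, Some b => Some (a + b)
  | _, _ => None
  end.

Definition mpmx (n : nat) := 'I_n -> 'I_n -> mp.
Definition mpvec (n : nat) := 'I_n -> mp.

Definition mx_add n (X Y : mpmx n) : mpmx n := fun i j => oplus (X i j) (Y i j).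
Definition mx_mul n (X Y : mpmx n) : mpmx n :=
  fun i j => \big[oplus/None]_(k < n) otimes (X i k) (Y k j).
Definition mx_vmul n (X : mpmx n) (v : mpvec n) : mpvec n :=
  fun i => \big[oplus/None]_(k < n) otimes (X i k) (v k).
Definition mx_id n : mpmx n := fun i j => if i == j then Some 0 else None.
Definition mx_pow n (X : mpmx n) (q : nat) : mpmx n := iter q (mx_mul X) (@mx_id n).
Definition mx_tr n (X : mpmx n) : mpmx n := fun i j => X j i.
Definition vec_add n (u v : mpvec n) : mpvec n := fun i => oplus (u i) (v i).

Definition mx_graph n (X : mpmx n) : rel 'I_n := fun i j => X i j != None.

End MaxPlus.

(* Graph notions on a relation e over a finType (arc (i,j) iff e i j).
   A path from x is x :: s with consecutive arcs and no repeated vertex;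
   its length is the number of arcs, size s. *)
Definition is_gpath (T : finType) (e : rel T) (x : T) (s : seq T) : bool :=
  path e x s && uniq (x :: s).

(* acyclic: no closed walk of positive length (loops count as cycles) *)
Definition acyclic (T : finType) (e : rel T) : Prop :=
  forall (x : T) (s : seq T), path e x s -> last x s = x -> s = [::].

Definition longest_path_length (T : finType) (e : rel T) (p : nat) : Prop :=
  (exists x s, is_gpath e x s /\ size s = p) /\
  (forall x s, is_gpath e x s -> size s <= p).

Section Network.
Variable R : realDomainType.
Variable n : nat.
Local Open Scope ring_scope.

(* A j i : arc (j,i) in the network graph, i.e. j \in P(i).
   r i : None = infinity, Some m = m.
   d : departure epochs d i k, k : nat; negative indices give eps. *)

(* d_j(k - m) with the convention d_j(l) = eps for l < 0 and k - infinity = -infinity *)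
Definition dshift (d : 'I_n -> nat -> mp R) (j : 'I_n) (k : nat) (m : option nat) : mp R :=
  match m with
  | Some m => if (m <= k)%N then d j (k - m)%N else None
  | None => None
  end.

Definition arrival (A : rel 'I_n) (r : 'I_n -> option nat)
    (d : 'I_n -> nat -> mp R) (i : 'I_n) (k : nat) : mp R :=
  if [exists j, A j i] then \big[@oplus R/None]_(j | A j i) dshift d j k (r i)
  else None.

Definition Mfin (r : 'I_n -> option nat) : nat := \max_(i < n) odflt 0%N (r i).

Definition Gm (A : rel 'I_n) (r : 'I_n -> option nat) (m : nat) : mpmx R n :=
  fun i j => if A i j && (r j == Some m) then Some 0 else None.

Definition Tdiag (tau : 'I_n -> nat -> R) (k : nat) : mpmx R n :=
  fun i j => if i == j then Some (tau i k) else None.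

Definition Tm (A : rel 'I_n) (r : 'I_n -> option nat) (tau : 'I_n -> nat -> R)
    (p : nat) (m k : nat) : mpmx R n :=
  let Tk := Tdiag tau k in
  let S := mx_pow (mx_add (@mx_id R n) (mx_mul Tk (mx_tr (Gm A r 0)))) p in
  if m == 1%N then mx_mul S (mx_mul Tk (mx_add (@mx_id R n) (mx_tr (Gm A r 1))))
  else mx_mul S (mx_mul Tk (mx_tr (Gm A r m))).

End Network.
Arguments Gm {R n} A r m.

(* For k >= 1 the departure recursion reads, in vector form,
     d(k) = A_k d(k) (+) b(k),   A_k = T_k G_0^T,
     b(k) = (+)_{m=1}^{M'} T_k H_m d(k-m),
   where H_1 = E (+) G_1^T and H_m = G_m^T for m >= 2 (the term E comes from
   the dependence of d_i(k) on d_i(k-1)).  Unrolling x = A x (+) b gives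
   x = A^(q+1) x (+) (+)_{l<=q} A^l b, and in the idempotent semiring
   (+)_{l<=q} A^l = (E (+) A)^q.  A nonzero entry of A_k^(p+1) would give a walk
   of length p+1 in the acyclic graph of G_0, hence a path longer than p; so
   A_k^(p+1) = eps and d(k) = (E (+) A_k)^p b(k), which is the claimed formula. *)

From HB Require Import structures.
From mathcomp Require Import all_boot all_order all_algebra.
Import Order.TTheory GRing.Theory Num.Theory.
Local Open Scope ring_scope.
Set Implicit Arguments. Unset Strict Implicit.

Section MaxPlusSemiring.
Variable R : realDomainType.
Local Notation op := (@oplus R).
Local Notation ot := (@otimes R).

(* (mp R, max, +) is a commutative semiring with zero eps and unit 0 in which
   addition is idempotent; the laws are registered as monoid structures so that
   the generic big-operator lemmas apply to iterated max-plus sums. *)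

Lemma oplusA : associative op.
Proof. by case=> [a|] [b|] [c|] //=; rewrite maxA. Qed.

Lemma oplusC : commutative op.
Proof. by case=> [a|] [b|] //=; rewrite maxC. Qed.

Lemma oplus0x : left_id None op.
Proof. by case. Qed.

Lemma oplusxx : idempotent_op op.
Proof. by case=> [a|] //=; rewrite maxxx. Qed.

Lemma otimesA : associative ot.
Proof. by case=> [a|] [b|] [c|] //=; rewrite addrA. Qed.

Lemma otimesC : commutative ot.
Proof. by case=> [a|] [b|] //=; rewrite addrC. Qed.

Lemma otimes0x : left_zero None ot.
Proof. by case. Qed.

Lemma otimesx0 : right_zero None ot.
Proof. by case. Qed.

Lemma otimes1x : left_id (Some 0) ot.
Proof. by case=> [a|] //=; rewrite add0r. Qed.

Lemma otimesDr : right_distributive ot op.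
Proof. by case=> [a|] [b|] [c|] //=; rewrite addr_maxr. Qed.

Lemma otimesDl : left_distributive ot op.
Proof. by move=> x y z; rewrite otimesC otimesDr !(otimesC z). Qed.

HB.instance Definition _ := Monoid.isComLaw.Build (mp R) None op oplusA oplusC oplus0x.
HB.instance Definition _ := Monoid.isMulLaw.Build (mp R) None ot otimes0x otimesx0.
HB.instance Definition _ := Monoid.isAddLaw.Build (mp R) ot op otimesDl otimesDr.

Lemma otimes_finite (a c : mp R) : ot a c != None -> a != None /\ c != None.
Proof. by case: a; case: c. Qed.

Lemma big_finite (I : finType) (F : I -> mp R) :
  \big[op/None]_l F l != None -> exists l, F l != None.
Proof.
case: (pickP (fun l => F l != None)) => [l Fl _|F_eps]; first by exists l.
by rewrite big1 ?eqxx // => l _; apply/eqP/negbFE/F_eps.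
Qed.

Lemma big_idem_shift (F : nat -> mp R) q :
  op (\big[op/None]_(l < q.+1) F l) (\big[op/None]_(l < q.+1) F l.+1) =
  \big[op/None]_(l < q.+2) F l.
Proof.
rewrite big_ord_recl (big_ord_recr q) [RHS]big_ord_recr big_ord_recl /=.
rewrite (eq_bigr (fun i : 'I_q => F i.+1)) // -!oplusA.
by rewrite (oplusA (\big[op/None]_(i < q) F i.+1)) oplusxx.
Qed.

End MaxPlusSemiring.

Section MaxPlusMatrices.
Variables (R : realDomainType) (n : nat).
Local Notation op := (@oplus R).
Local Notation ot := (@otimes R).
Implicit Types (X Y : mpmx R n) (u v : mpvec R n).

Lemma vmul_ext X u v :
  (forall j, u j = v j) -> forall i, mx_vmul X u i = mx_vmul X v i.
Proof. by move=> e i; apply: eq_bigr => j _; rewrite e. Qed.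

Lemma vmul_mul X Y v i : mx_vmul (mx_mul X Y) v i = mx_vmul X (mx_vmul Y v) i.
Proof.
rewrite /mx_vmul /mx_mul; under eq_bigr do rewrite big_distrl.
rewrite exchange_big /=; apply: eq_bigr => l _.
by rewrite big_distrr; apply: eq_bigr => k _; rewrite -otimesA.
Qed.

Lemma vmul_add X Y v i :
  mx_vmul (mx_add X Y) v i = op (mx_vmul X v i) (mx_vmul Y v i).
Proof. by rewrite /mx_vmul -big_split; apply: eq_bigr => j _; rewrite otimesDl. Qed.

Lemma vmul_vadd X u v i :
  mx_vmul X (fun j => op (u j) (v j)) i = op (mx_vmul X u i) (mx_vmul X v i).
Proof. by rewrite /mx_vmul -big_split; apply: eq_bigr => j _; rewrite otimesDr. Qed.

Lemma vmul_big (I : Type) (s : seq I) (P : pred I) X (F : I -> mpvec R n) i :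
  mx_vmul X (fun j => \big[op/None]_(m <- s | P m) F m j) i =
  \big[op/None]_(m <- s | P m) mx_vmul X (F m) i.
Proof.
by rewrite /mx_vmul; under eq_bigr do rewrite big_distrr; rewrite exchange_big.
Qed.

Lemma vmul_diag (a : 'I_n -> mp R) v i :
  mx_vmul (fun i j => if i == j then a i else None) v i = ot (a i) (v i).
Proof.
rewrite /mx_vmul (bigD1 i) //= eqxx big1 => [|j ji]; first by rewrite Monoid.mulm1.
by rewrite eq_sym (negbTE ji).
Qed.

Lemma vmul_id v i : mx_vmul (@mx_id R n) v i = v i.
Proof. by rewrite (vmul_diag (fun=> Some 0)) otimes1x. Qed.

Lemma vmul_Tdiag (tau : 'I_n -> nat -> R) k v i :
  mx_vmul (Tdiag tau k) v i = ot (Some (tau i k)) (v i).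
Proof. exact: (vmul_diag (fun i => Some (tau i k))). Qed.

Lemma vmul_pow0 X v i : mx_vmul (mx_pow X 0) v i = v i.
Proof. exact: vmul_id. Qed.

Lemma vmul_powS X q v i :
  mx_vmul (mx_pow X q.+1) v i = mx_vmul X (mx_vmul (mx_pow X q) v) i.
Proof. exact: vmul_mul. Qed.

Lemma mul_Tdiag (tau : 'I_n -> nat -> R) k X i l :
  mx_mul (Tdiag tau k) X i l = ot (Some (tau i k)) (X i l).
Proof. exact: (vmul_Tdiag tau k (fun m => X m l)). Qed.

Lemma vmul_eps_row X v i : (forall j, X i j = None) -> mx_vmul X v i = None.
Proof. by move=> e; apply: big1 => j _; rewrite e. Qed.

End MaxPlusMatrices.

Section KleeneStar.
Variables (R : realDomainType) (n : nat) (A : mpmx R n) (b : mpvec R n).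
Local Notation op := (@oplus R).

Lemma vmul_star q i :
  mx_vmul (mx_pow (mx_add (@mx_id R n) A) q) b i =
  \big[op/None]_(l < q.+1) mx_vmul (mx_pow A l) b i.
Proof.
elim: q i => [|q IH] i; first by rewrite big_ord1 !vmul_pow0.
rewrite vmul_powS vmul_add vmul_id (vmul_ext _ IH) vmul_big IH.
rewrite [X in op _ X](eq_bigr (fun l : 'I_q.+1 => mx_vmul (mx_pow A l.+1) b i)).
  exact: (big_idem_shift (fun l => mx_vmul (mx_pow A l) b i)).
by move=> l _; rewrite vmul_powS.
Qed.

Section Unfolding.
Variable x : mpvec R n.
Hypothesis x_fix : forall i, x i = op (mx_vmul A x i) (b i).

Lemma fixpoint_unfold q i :
  x i = op (mx_vmul (mx_pow A q.+1) x i)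
           (\big[op/None]_(l < q.+1) mx_vmul (mx_pow A l) b i).
Proof.
elim: q i => [|q IH] i.
  by rewrite big_ord1 vmul_pow0 vmul_powS (vmul_ext _ (vmul_pow0 _ x)).
rewrite {1}x_fix (vmul_ext _ IH) vmul_vadd -vmul_powS vmul_big.
rewrite [in RHS]big_ord_recl vmul_pow0 -oplusA (oplusC (b i)).
by congr (op _ (op _ _)); apply: eq_bigr => l _; rewrite lift0 vmul_powS.
Qed.

Lemma nilpotent_fixpoint p :
  (forall i j, mx_pow A p.+1 i j = None) ->
  forall i, x i = mx_vmul (mx_pow (mx_add (@mx_id R n) A) p) b i.
Proof.
move=> A_nil i; rewrite vmul_star (fixpoint_unfold p i).
by rewrite vmul_eps_row ?oplus0x.
Qed.

End Unfolding.
End KleeneStar.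

Section AcyclicGraphs.
Variables (T : finType) (e : rel T).

(* In an acyclic graph every walk is a path: a repeated vertex would close a cycle. *)
Lemma acyclic_walk_uniq : acyclic e -> forall x s, path e x s -> uniq (x :: s).
Proof.
move=> e_acyclic x s; elim: s x => [|y s IH] x // /andP [exy ys].
rewrite cons_uniq (IH y ys) andbT; apply/negP => x_in.
have: path e x (y :: s) by rewrite /= exy.
case/splitPr: x_in => s1 s2; rewrite cat_path /= => /and3P [ys1 ex _].
have := e_acyclic x (rcons s1 x); rewrite rcons_path ys1 ex last_rcons.
by case: s1 {ys1 ex} => [|? ?] /(_ isT erefl).
Qed.

End AcyclicGraphs.

Section NilpotentMatrices.
Variables (R : realDomainType) (n : nat) (X : mpmx R n) (g : rel 'I_n).

Hypothesis X_in_g : forall i l, X i l != None -> g l i.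

Lemma walk_of_pow q i j :
  mx_pow X q i j != None -> exists s, [/\ path g j s, last j s = i & size s = q].
Proof.
elim: q i => [|q IH] i.
  by rewrite /mx_pow /= /mx_id; case: (i =P j) => [-> _|//]; exists [::].
case/big_finite => l /otimes_finite [Xil /IH [s [js sl ss]]].
exists (rcons s i); rewrite rcons_path js sl last_rcons size_rcons ss.
by split=> //; apply: X_in_g.
Qed.

Lemma pow_nilpotent p :
  acyclic g -> longest_path_length g p -> forall i j, mx_pow X p.+1 i j = None.
Proof.
move=> g_acyclic [_ longest] i j; apply/eqP; apply: contraT => /walk_of_pow.
case=> s [js _ ss]; have := longest j s.
by rewrite /is_gpath js (acyclic_walk_uniq g_acyclic js) ss ltnn => /(_ isT).
Qed.
End NilpotentMatrices.

Section Network.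
Variables (R : realDomainType) (n : nat) (A : rel 'I_n) (r : 'I_n -> option nat).
Variable d : 'I_n -> nat -> mp R.
Local Notation op := (@oplus R).
Local Notation M' := (maxn (Mfin r) 1).

Hypothesis r_inf_source : forall i, (r i == None) = ~~ [exists j, A j i].

(* The matrix multiplying d(k-m) before T_k in T_m(k): E (+) G_1^T for m = 1,
   G_m^T otherwise; it absorbs the self-dependence of d_i(k) on d_i(k-1). *)
Definition Hm (m : nat) : mpmx R n :=
  if m == 1%N then mx_add (@mx_id R n) (mx_tr (Gm A r 1)) else mx_tr (Gm A r m).

Lemma Tm_factor (tau : 'I_n -> nat -> R) p m k :
  Tm A r tau p m k =
  mx_mul (mx_pow (mx_add (@mx_id R n) (mx_mul (Tdiag tau k) (mx_tr (Gm A r 0)))) p)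
         (mx_mul (Tdiag tau k) (Hm m)).
Proof. by rewrite /Tm /Hm; case: (m == 1%N). Qed.

Lemma arrival_matrix i k :
  arrival A r d i k =
  \big[op/None]_(0 <= m < M'.+1)
     mx_vmul (mx_tr (Gm A r m)) (fun j => dshift d j k (Some m)) i.
Proof.
rewrite /arrival; case ri: (r i) (r_inf_source i) => [m0|] /=; last first.
  move=> _; rewrite big1 // if_same; apply/esym/big1 => m _.
  by apply: vmul_eps_row => j; rewrite /mx_tr /Gm ri andbF.
move=> /esym /negbFE ->.
have m0_le : (m0 < M'.+1)%N.
  rewrite ltnS (leq_trans _ (leq_maxl _ _)) //.
  by have := @leq_bigmax _ (fun i => odflt 0%N (r i)) i; rewrite ri.
rewrite (bigD1_seq m0) ?mem_index_iota ?iota_uniq //=.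
rewrite [X in _ = op _ X]big1 => [|m m_neq].
  rewrite Monoid.mulm1 /mx_vmul big_mkcond; apply: eq_bigr => j _.
  by rewrite /mx_tr /Gm ri eqxx andbT; case: (A j i) => //; rewrite otimes1x.
apply: (vmul_eps_row (X := mx_tr (Gm A r m))) => j; rewrite /mx_tr /Gm ri.
case: (Some m0 =P Some m) => [[m0_m]|_]; last by rewrite andbF.
by rewrite m0_m eqxx in m_neq.
Qed.

Lemma arrival_with_previous i k : (0 < k)%N ->
  op (arrival A r d i k) (d i k.-1) =
  op (mx_vmul (mx_tr (Gm A r 0)) (fun j => d j k) i)
     (\big[op/None]_(1 <= m < M'.+1) mx_vmul (Hm m) (fun j => dshift d j k (Some m)) i).
Proof.
move=> k_gt0; have M'_gt0 : (0 < M')%N by rewrite leq_max orbT.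
have shift0 j : dshift d j k (Some 0%N) = d j k by rewrite /dshift subn0.
have shift1 : dshift d i k (Some 1%N) = d i k.-1 by rewrite /dshift k_gt0 subn1.
have delayed : \big[op/None]_(2 <= m < M'.+1)
                 mx_vmul (mx_tr (Gm A r m)) (fun j => dshift d j k (Some m)) i =
               \big[op/None]_(2 <= m < M'.+1)
                 mx_vmul (Hm m) (fun j => dshift d j k (Some m)) i.
  by apply: eq_big_nat => -[|[|m]].
rewrite arrival_matrix big_ltn // [in LHS]big_ltn ?ltnS // [in RHS]big_ltn ?ltnS //.
rewrite delayed (vmul_ext _ shift0) [Hm 1]/Hm eqxx vmul_add vmul_id shift1.
by rewrite -!oplusA; congr (op _ _); rewrite [RHS]oplusC -oplusA.
Qed.

Lemma departure_implicit (tau : 'I_n -> nat -> R) k :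
  (forall i, d i k = op (otimes (Some (tau i k)) (arrival A r d i k))
                        (otimes (Some (tau i k)) (d i k.-1))) ->
  (0 < k)%N -> forall i,
  d i k = op (mx_vmul (mx_mul (Tdiag tau k) (mx_tr (Gm A r 0))) (fun j => d j k) i)
             (\big[op/None]_(1 <= m < M'.+1)
                 mx_vmul (mx_mul (Tdiag tau k) (Hm m))
                   (fun j => dshift d j k (Some m)) i).
Proof.
move=> d_rec k_gt0 i; rewrite {1}d_rec -otimesDr arrival_with_previous //.
rewrite otimesDr vmul_mul vmul_Tdiag; congr (op _ _).
rewrite big_distrr; apply: eq_big_nat => m _.
by rewrite vmul_mul vmul_Tdiag.
Qed.

End Network.

Unset Implicit Arguments. Set Strict Implicit.

Theorem theorem2 (R : realDomainType) (n : nat) (A : rel 'I_n)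
    (r : 'I_n -> option nat) (tau : 'I_n -> nat -> R)
    (d : 'I_n -> nat -> mp R) (p : nat) :
  (forall i, (r i == None) = ~~ [exists j, A j i]) ->
  (forall i k, (0 < k)%N -> 0 < tau i k) ->
  (forall i, d i 0%N = Some 0) ->
  (forall i k, (0 < k)%N ->
     d i k = oplus (otimes (Some (tau i k)) (arrival A r d i k))
                   (otimes (Some (tau i k)) (d i k.-1))) ->
  acyclic (mx_graph (@Gm R n A r 0)) ->
  longest_path_length (mx_graph (@Gm R n A r 0)) p ->
  forall k, (0 < k)%N ->
    forall i, d i k =
      \big[@oplus R/None]_(1 <= m < (maxn (Mfin r) 1).+1)
         mx_vmul (Tm A r tau p m k) (fun j => dshift d j k (Some m)) i.
Proof.
move=> r_inf_source _ _ d_rec G0_acyclic G0_longest k k_gt0 i.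
pose Ak := mx_mul (Tdiag tau k) (mx_tr (Gm A r 0)).
have Ak_nil : forall i j, mx_pow Ak p.+1 i j = None.
  apply: (pow_nilpotent _ _ G0_longest) => // i' l.
  by rewrite /Ak mul_Tdiag => /otimes_finite [].
under eq_bigr do rewrite Tm_factor vmul_mul.
rewrite -vmul_big.
have d_implicit := departure_implicit r_inf_source (fun i => d_rec i k k_gt0) k_gt0.
exact (nilpotent_fixpoint d_implicit Ak_nil i).
Qed.
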